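(* Let $\Gamma$ be a group with centre $Z\Gamma$, and $G=\bigoplus_{\mathbf{Q}_2}\Gamma\rtimes V$ with $V$ acting by $(v\cdot a)(x)=a(v^{-1}x)$. For $v\in V$ let $p_v(x)=\log_2(v'(v^{-1}x))-\nu(x)+\nu(v^{-1}x)$, $x\in\mathbf{Q}_2$, and for $\zeta\in Z\Gamma$ let $c(\zeta)_v(x)=\zeta^{p_v(x)}$. Then $c(\zeta)$ takes values in $\bigoplus_{\mathbf{Q}_2}Z\Gamma$ and satisfies $c(\zeta)_{vw}=c(\zeta)_v\cdot c(\zeta)_w^v$ for all $v,w\in V$, where $c_w^v(x)=c_w(v^{-1}x)$. Moreover $E:Z\Gamma\to\mathrm{Aut}(G)$, $E_\zeta(av)=a\cdot c(\zeta)_v\cdot v$ ($a\in\bigoplus_{\mathbf{Q}_2}\Gamma$, $v\in V$), is a well-defined injective group morphism.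
   Context: Cantor space $\mathfrak C=\{0,1\}^{\mathbf N}$; $C_m=\{m\cdot x\}$. Thompson's group $V$: homeomorphisms $v$ with $v(m_kx)=m'_kx$ for partitions $\mathfrak C=\bigsqcup C_{m_k}=\bigsqcup C_{m'_k}$; slope $v'(x)=2^{|m_k|-|m'_k|}$ on $C_{m_k}$. $\mathbf{Q}_2\subset\mathfrak C$: eventually-zero sequences, identified with dyadic rationals of $[0,1)$ via $x\mapsto\sum_{n\ge1}x_n2^{-n}$. $\nu$ is the dyadic valuation on $\mathbf{Q}$: $\nu(0)=0$, $\nu(2^kp/q)=k$ for $p,q$ odd. $\bigoplus_{\mathbf{Q}_2}\Gamma$ denotes finitely supported maps $\mathbf{Q}_2\to\Gamma$. *)

From HB Require Import structures.
From mathcomp Require Import all_boot all_order.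
From mathcomp Require Import ssralg ssrnum ssrint rat.
From Stdlib Require Import ClassicalEpsilon.

Set Implicit Arguments.
Unset Strict Implicit.
Unset Printing Implicit Defensive.

(** Cantor space {0,1}^N, indices starting at 0 (x_0 is the paper's x_1). *)
Definition cantor := nat -> bool.

Definition word := seq bool.

Definition wcat (m : word) (x : cantor) : cantor :=
  fun n => if n < size m then nth false m n else x (n - size m).

Definition in_cyl (m : word) (x : cantor) : Prop := exists y, x = wcat m y.

Definition cyl_partition (ms : seq word) : Prop :=
  forall x : cantor, exists! k, k < size ms /\ in_cyl (nth [::] ms k) x.

Definition V_data (v : cantor -> cantor) (ms ms' : seq word) : Prop :=
  [/\ cyl_partition ms, cyl_partition ms', size ms = size ms' &
      forall k x, k < size ms -> v (wcat (nth [::] ms k) x) = wcat (nth [::] ms' k) x].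

(** Thompson's group V, as a set of self-maps of Cantor space
    (group law = composition). *)
Definition isV (v : cantor -> cantor) : Prop := exists ms ms', V_data v ms ms'.

Definition Vinv (v : cantor -> cantor) : cantor -> cantor :=
  epsilon (inhabits id) (fun g => forall x, g (v x) = x /\ v (g x) = x).

Definition log2_slope (v : cantor -> cantor) (x : cantor) : int :=
  epsilon (inhabits 0%R) (fun d : int => exists ms ms' k,
    [/\ V_data v ms ms', k < size ms, in_cyl (nth [::] ms k) x &
        d = ((size (nth [::] ms k))%:Z - (size (nth [::] ms' k))%:Z)%R]).

Definition isQ2 (x : cantor) : Prop := exists N, forall n, N <= n -> x n = false.

Definition q2bound (x : cantor) : nat :=
  epsilon (inhabits 0) (fun N => forall n, N <= n -> x n = false).

(** The dyadic rational sum_{n>=1} x_n 2^{-n} (with 0-based indices). *)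
Definition q2rat (x : cantor) : rat :=
  (\sum_(i < q2bound x) (x i)%:R / 2%:R ^+ i.+1)%R.

Definition nu (r : rat) : int :=
  if r == 0%R then 0%R
  else ((logn 2 `|numq r|)%:Z - (logn 2 `|denq r|)%:Z)%R.

Definition zpow (Gam : groupType) (g : Gam) (z : int) : Gam :=
  match z with
  | Posz n => (g ^+ n)%g
  | Negz n => ((g ^+ n.+1)^-1)%g
  end.

Definition central (Gam : groupType) (z : Gam) : Prop :=
  forall g : Gam, (z * g = g * z)%g.

(** Finitely supported maps Q_2 -> Gamma, encoded as maps on Cantor space
    which are trivial outside Q_2 and outside a finite set. *)
Definition fsupp (Gam : groupType) (a : cantor -> Gam) : Prop :=
  (forall x, ~ isQ2 x -> a x = 1%g) /\
  exists s : list cantor, forall x, a x <> 1%g -> List.In x s.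

Definition actV (Gam : groupType) (v : cantor -> cantor) (a : cantor -> Gam) :
  cantor -> Gam := fun x => a (Vinv v x).

(** Raw carrier: pairs (a, v) standing for the element a v. *)
Definition Gel (Gam : groupType) : Type := ((cantor -> Gam) * (cantor -> cantor))%type.

Definition inG (Gam : groupType) (g : Gel Gam) : Prop := fsupp g.1 /\ isV g.2.

Definition Gmul (Gam : groupType) (g h : Gel Gam) : Gel Gam :=
  ((fun x => g.1 x * actV g.2 h.1 x)%g, g.2 \o h.2).

Definition isAutG (Gam : groupType) (f : Gel Gam -> Gel Gam) : Prop :=
  [/\ forall g, inG g -> inG (f g),
      forall g h, inG g -> inG h -> f (Gmul g h) = Gmul (f g) (f h),
      forall g h, inG g -> inG h -> f g = f h -> g = h &
      forall h, inG h -> exists g, inG g /\ f g = h].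

Definition p_v (v : cantor -> cantor) (x : cantor) : int :=
  (log2_slope v (Vinv v x) - nu (q2rat x) + nu (q2rat (Vinv v x)))%R.

Definition c_coc (Gam : groupType) (zeta : Gam) (v : cantor -> cantor) :
  cantor -> Gam :=
  fun x => if excluded_middle_informative (isQ2 x) then zpow zeta (p_v v x)
           else 1%g.

Definition E_aut (Gam : groupType) (zeta : Gam) (g : Gel Gam) : Gel Gam :=
  ((fun x => g.1 x * c_coc zeta g.2 x)%g, g.2).

(* Write v in V as prefix replacements [m_k z |-> m'_k z].  Slopes multiply under
   composition and the valuation terms telescope, so
   [p_{vw}(x) = p_v(x) + p_w(v^-1 x)]; exponentiating a central [zeta] gives the
   cocycle identity.  If [z] has its last 1 at position [L], then
   [nu(m'_k z) = -(L + 1 + |m'_k|)] and [nu(m_k z) = -(L + 1 + |m_k|)], which cancels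
   the slope [|m_k| - |m'_k|]: so [p_v] vanishes off the finitely many points
   [m'_k 000...].  By the cocycle identity and centrality, [E_zeta] is an
   endomorphism of [G], with inverse [a v |-> a c(zeta)_v^-1 v]; it is
   multiplicative in [zeta], and faithful because [p = -1] at [000...] for the
   generator [A] of Thompson's group [F]. *)

From mathcomp Require Import all_boot ssralg ssrint rat.
From mathcomp Require Import ssrnum zify.
From Stdlib Require Import ClassicalEpsilon FunctionalExtensionality Classical.

Set Implicit Arguments.
Unset Strict Implicit.
Unset Printing Implicit Defensive.

Import GRing.Theory Num.Theory.

(** * Cylinders *)

Definition cdrop (n : nat) (x : cantor) : cantor := fun i => x (i + n).

Definition in_cylb (m : word) (x : cantor) : bool :=
  all (fun i => x i == nth false m i) (iota 0 (size m)).

Lemma wcat_lt m z i : i < size m -> wcat m z i = nth false m i.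
Proof. by rewrite /wcat => ->. Qed.

Lemma wcat_addn m z i : wcat m z (i + size m) = z i.
Proof. by rewrite /wcat ltnNge leq_addl /= addnK. Qed.

Lemma cdrop_wcat m z : cdrop (size m) (wcat m z) = z.
Proof. by apply: functional_extensionality => i; apply: wcat_addn. Qed.

Lemma wcat_inj m : injective (wcat m).
Proof. by move=> z1 z2 e; rewrite -(cdrop_wcat m z1) e cdrop_wcat. Qed.

Lemma wcat_cat a b z : wcat (a ++ b) z = wcat a (wcat b z).
Proof.
apply: functional_extensionality => n; rewrite /wcat size_cat nth_cat.
case: (ltnP n (size a)) => ha; first by rewrite (leq_trans ha (leq_addr _ _)).
by rewrite -subnDA -[in RHS](ltn_add2l (size a)) (subnKC ha).
Qed.

Lemma in_cylP m x : reflect (in_cyl m x) (in_cylb m x).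
Proof.
apply: (iffP allP) => [xm | [y ->] i].
  exists (cdrop (size m) x); apply: functional_extensionality => n.
  rewrite /wcat /cdrop; case: ltnP => [n_lt | n_ge]; last by rewrite subnK.
  by apply/eqP/xm; rewrite mem_iota.
by rewrite mem_iota add0n => /wcat_lt ->.
Qed.

Lemma in_cylb_wcat m z : in_cylb m (wcat m z).
Proof. by apply/in_cylP; exists z. Qed.

Lemma in_cylb_cat a u x :
  in_cylb (a ++ u) x = in_cylb a x && in_cylb u (cdrop (size a) x).
Proof.
apply/in_cylP/andP => [[y ->] | [/in_cylP [y ->] /in_cylP [z]]].
  by rewrite wcat_cat cdrop_wcat !in_cylb_wcat.
by rewrite cdrop_wcat => ->; exists z; rewrite wcat_cat.
Qed.

Lemma wcat_size_eq a b : (forall z, wcat a z = wcat b z) -> size a = size b.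
Proof.
wlog ab : a b / size a < size b.
  move=> gen e; case: (ltngtP (size a) (size b)) => // ab; first exact: gen.
  by symmetry; apply: gen => // z; rewrite e.
move=> e; have := congr1 (fun x => x (size a)) (e (fun _ => true)).
have := congr1 (fun x => x (size a)) (e (fun _ => false)).
by rewrite /= /wcat ltnn ab => <-.
Qed.

Lemma wcat_eq_prefix a b z1 z2 : wcat a z1 = wcat b z2 ->
  (exists u, b = a ++ u) \/ (exists u, a = b ++ u).
Proof.
wlog ab : a b z1 z2 / size a <= size b.
  move=> gen e; case: (leqP (size a) (size b)) => ab; first exact: gen e.
  by case: (gen b a z2 z1 (ltnW ab) (esym e)); [right | left].
move=> e; left; exists (drop (size a) b).
suff take_b : take (size a) b = a by rewrite -[X in X ++ _]take_b cat_take_drop.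
apply: (@eq_from_nth _ false); first by rewrite size_take_min (minn_idPl ab).
move=> i; rewrite size_take_min (minn_idPl ab) => ia; rewrite nth_take //.
have := congr1 (fun x => x i) e.
by rewrite /= wcat_lt // wcat_lt ?(leq_trans ia ab) // => ->.
Qed.

Lemma count_eq1P (T : Type) (x0 : T) (p : pred T) (s : seq T) :
  count p s = 1 <-> exists! k, k < size s /\ p (nth x0 s k).
Proof.
elim: s => [|a s IH] /=; first by split => // [[k [[]]]].
case: (boolP (p a)) => pa.
  rewrite add1n; split.
    move=> /eqP; rewrite eqSS -leqn0 leqNgt -has_count => hs.
    exists 0; split => // [[|k]] [//] ks pk.
    by case/negP: hs; apply/(has_nthP x0); exists k.
  move=> [k [_ uniq_k]]; congr S; apply/eqP; rewrite -leqn0 leqNgt -has_count.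
  apply/negP => /(has_nthP x0) [j js pj].
  by have := uniq_k j.+1 (conj js pj); rewrite (uniq_k 0 (conj isT pa)).
rewrite add0n IH; split.
  move=> [k [[ks pk] uniq_k]]; exists k.+1; split => // [[|j]] [js pj].
    by rewrite pj in pa.
  by rewrite (uniq_k j).
move=> [[|k] [[ks pk] uniq_k]]; first by rewrite pk in pa.
by exists k; split => // j [js pj]; case: (uniq_k j.+1 (conj js pj)).
Qed.

Lemma cyl_partitionP ms :
  cyl_partition ms <-> forall x, count (in_cylb^~ x) ms = 1.
Proof.
have eq_P x k : k < size ms /\ in_cyl (nth [::] ms k) x <->
                k < size ms /\ in_cylb (nth [::] ms k) x.
  by split=> -[ks /in_cylP].
split=> part x.
  apply/(count_eq1P [::]); have [k [kx uniq_k]] := part x.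
  by exists k; split=> [|j /eq_P]; [apply/eq_P | apply: uniq_k].
have /(count_eq1P [::]) [k [kx uniq_k]] := part x.
by exists k; split=> [|j /eq_P]; [apply/eq_P | apply: uniq_k].
Qed.

(** * Composition in V *)

Definition replaces (v : cantor -> cantor) (a b : word) : Prop :=
  forall z, v (wcat a z) = wcat b z.

(* A pair [(a, b)] stands for the prefix replacement [a z |-> b z]; [comp_pair p q]
   is [q] after [p] on the cylinder where the two replacements can be chained
   (empty when the intermediate words are incomparable). *)
Definition comp_pair (p q : word * word) : seq (word * word) :=
  if take (size p.2) q.1 == p.2 then [:: (p.1 ++ drop (size p.2) q.1, q.2)]
  else if take (size q.1) p.2 == q.1 then [:: (p.1, q.2 ++ drop (size q.1) p.2)]
  else [::].

Definition comp_pairs (P Q : seq (word * word)) : seq (word * word) :=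
  flatten [seq flatten [seq comp_pair p q | q <- Q] | p <- P].

Definition pair_swap (r : word * word) : word * word := (r.2, r.1).

Lemma count_comp_pair_dom p q x :
  count (fun r => in_cylb r.1 x) (comp_pair p q) =
  in_cylb p.1 x && in_cylb q.1 (wcat p.2 (cdrop (size p.1) x)).
Proof.
case: p q => a a' [b b']; rewrite /comp_pair /=.
case: ifP => [/eqP ab | ab].
  rewrite /= addn0 -[in RHS](cat_take_drop (size a') b) ab !in_cylb_cat.
  rewrite in_cylb_wcat cdrop_wcat /=.
  by case: (boolP (in_cylb a x)) => //= /in_cylP [y ->]; rewrite cdrop_wcat.
case: ifP => [/eqP ba | ba].
  rewrite /= addn0 -[in RHS](cat_take_drop (size b) a') ba wcat_cat.
  by rewrite in_cylb_wcat andbT.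
rewrite /=; case: andP => // -[_ /in_cylP [z /wcat_eq_prefix [[u e] | [u e]]]].
  by rewrite e take_size_cat // eqxx in ab.
by rewrite e take_size_cat // eqxx in ba.
Qed.

Lemma count_comp_pair_cod p q x :
  count (fun r => in_cylb r.2 x) (comp_pair p q) =
  count (fun r => in_cylb r.1 x) (comp_pair (pair_swap q) (pair_swap p)).
Proof.
case: p q => a a' [b b']; rewrite /comp_pair /pair_swap /=.
case: ifP => [/eqP ab | ab]; case: ifP => [/eqP ba | ba] //=.
have a'b : size a' <= size b by apply/minn_idPl; rewrite -size_take_min ab.
have ba' : size b <= size a' by apply/minn_idPl; rewrite -size_take_min ba.
by rewrite drop_oversize ?cats0.
Qed.

Lemma count_comp_pairs f P Q :
  count f (comp_pairs P Q) = \sum_(p <- P) \sum_(q <- Q) count f (comp_pair p q).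
Proof.
elim: P => [|p P IH]; first by rewrite big_nil.
rewrite /comp_pairs /= count_cat -/(comp_pairs P Q) IH big_cons; congr addn.
by elim: Q {IH} => [|q Q IHq]; rewrite ?big_nil //= count_cat IHq big_cons.
Qed.

Lemma count_comp_pairs_dom P Q x :
  (forall y, count (fun q => in_cylb q.1 y) Q = 1) ->
  count (fun r => in_cylb r.1 x) (comp_pairs P Q) = count (fun p => in_cylb p.1 x) P.
Proof.
move=> partQ; rewrite count_comp_pairs.
elim: P => [|p P IH]; first by rewrite big_nil.
rewrite big_cons IH /=; congr addn.
have -> : \sum_(q <- Q) count (fun r => in_cylb r.1 x) (comp_pair p q) =
          in_cylb p.1 x * count (fun q => in_cylb q.1 (wcat p.2 (cdrop (size p.1) x))) Q.
  elim: Q {partQ IH} => [|q Q IHQ]; first by rewrite big_nil muln0.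
  by rewrite big_cons IHQ count_comp_pair_dom /= mulnDr mulnb.
by rewrite partQ muln1.
Qed.

Lemma count_comp_pairs_cod P Q x :
  (forall y, count (fun p => in_cylb p.2 y) P = 1) ->
  count (fun r => in_cylb r.2 x) (comp_pairs P Q) = count (fun q => in_cylb q.2 x) Q.
Proof.
move=> partP; rewrite count_comp_pairs.
under eq_bigr do under eq_bigr do rewrite count_comp_pair_cod.
rewrite exchange_big /=.
have -> : \sum_(q <- Q) \sum_(p <- P)
            count (fun r => in_cylb r.1 x) (comp_pair (pair_swap q) (pair_swap p)) =
          \sum_(q <- map pair_swap Q) \sum_(p <- map pair_swap P)
            count (fun r => in_cylb r.1 x) (comp_pair q p).
  by rewrite big_map; apply: eq_bigr => q _; rewrite big_map.
rewrite -count_comp_pairs count_comp_pairs_dom ?count_map // => y.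
by rewrite count_map -(partP y).
Qed.

Lemma replaces_comp_pairs v w (P Q : seq (word * word)) r :
  {in P, forall p, replaces w p.1 p.2} -> {in Q, forall q, replaces v q.1 q.2} ->
  r \in comp_pairs P Q -> replaces (v \o w) r.1 r.2.
Proof.
move=> wP vQ /flattenP [s /mapP [[a a'] /wP wp ->]] /flattenP [s' /mapP [[b b'] /vQ vq ->]].
rewrite /replaces /comp_pair /= in wp vq *; case: ifP => [/eqP ab | _].
  rewrite inE => /eqP -> z /=.
  by rewrite wcat_cat (wp (wcat _ z)) -wcat_cat -{1}ab cat_take_drop (vq z).
case: ifP => [/eqP ba | //]; rewrite inE => /eqP -> z /=.
by rewrite (wp z) -{1}(cat_take_drop (size b) a') ba !wcat_cat vq.
Qed.

Lemma V_data_zip v ms ms' : V_data v ms ms' ->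
  [/\ {in zip ms ms', forall r, replaces v r.1 r.2},
      forall y, count (fun r => in_cylb r.1 y) (zip ms ms') = 1 &
      forall y, count (fun r => in_cylb r.2 y) (zip ms ms') = 1].
Proof.
case=> /cyl_partitionP part /cyl_partitionP part' size_eq vms; split.
- move=> r /(nthP ([::], [::])) [i ilt <-] z.
  by rewrite nth_zip //=; apply: vms; rewrite size_zip -size_eq minnn in ilt.
- by move=> y; rewrite -(count_map fst (in_cylb^~ y)) -/(unzip1 _) unzip1_zip ?size_eq.
- by move=> y; rewrite -(count_map snd (in_cylb^~ y)) -/(unzip2 _) unzip2_zip ?size_eq.
Qed.

Lemma V_comp v w : isV v -> isV w -> isV (v \o w).
Proof.
move=> [ns [ns' /V_data_zip [vN domN codN]]] [ms [ms' /V_data_zip [wM domM codM]]].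
set C := comp_pairs (zip ms ms') (zip ns ns').
exists (map fst C), (map snd C); split.
- by apply/cyl_partitionP => x; rewrite count_map count_comp_pairs_dom.
- by apply/cyl_partitionP => x; rewrite count_map count_comp_pairs_cod.
- by rewrite !size_map.
- move=> k x; rewrite size_map => klt.
  rewrite !(nth_map ([::], [::])) //.
  exact: (replaces_comp_pairs wM vN (mem_nth _ klt)).
Qed.

(** * Inverses and slopes *)

Section VData.
Variables (v : cantor -> cantor) (ms ms' : seq word).
Hypothesis vms : V_data v ms ms'.

Lemma V_data_dom x : exists k z,
  [/\ k < size ms, x = wcat (nth [::] ms k) z & v x = wcat (nth [::] ms' k) z].
Proof.
case: vms => part _ _ vE; have [k [[klt [z xE]] _]] := part x.
by exists k, z; rewrite xE vE.
Qed.

Lemma V_data_cod y : exists k z,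
  [/\ k < size ms, y = wcat (nth [::] ms' k) z & v (wcat (nth [::] ms k) z) = y].
Proof.
case: vms => _ part' size_eq vE; have [k [[klt [z yE]] _]] := part' y.
by exists k, z; rewrite size_eq yE vE ?size_eq.
Qed.

Lemma V_data_inj : injective v.
Proof.
move=> x1 x2 v12.
have [k1 [z1 [k1lt x1E v1]]] := V_data_dom x1.
have [k2 [z2 [k2lt x2E v2]]] := V_data_dom x2.
case: vms => _ part' size_eq _; have [k [_ uniq_k]] := part' (v x1).
have k1E : k = k1 by apply: uniq_k; rewrite -size_eq v1; split=> //; exists z1.
have k2E : k = k2 by apply: uniq_k; rewrite -size_eq v12 v2; split=> //; exists z2.
subst k1 k2; rewrite x1E x2E; congr wcat.
by apply: (@wcat_inj (nth [::] ms' k)); rewrite -v1 -v2 v12.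
Qed.

End VData.

Lemma V_bijective v : isV v -> bijective v.
Proof.
move=> [ms [ms' vms]]; pose g y := epsilon (inhabits y) (fun x => v x = y).
have vg y : v (g y) = y.
  apply: (epsilon_spec (inhabits y) (fun x => v x = y)).
  by have [k [z [_ _ <-]]] := V_data_cod vms y; eexists.
by exists g => // x; apply: (V_data_inj vms); rewrite vg.
Qed.

Lemma Vinv_bijective v : bijective v -> cancel v (Vinv v) /\ cancel (Vinv v) v.
Proof.
move=> [g gK Kg].
have spec := epsilon_spec (inhabits id) (fun g => forall x, g (v x) = x /\ v (g x) = x)
  (ex_intro _ g (fun x => conj (gK x) (Kg x))).
by split=> x; case: (spec x).
Qed.

Lemma VK v : isV v -> cancel v (Vinv v).
Proof. by move/V_bijective/Vinv_bijective => []. Qed.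

Lemma VKV v : isV v -> cancel (Vinv v) v.
Proof. by move/V_bijective/Vinv_bijective => []. Qed.

Lemma Vinv_comp v w : isV v -> isV w -> Vinv (v \o w) =1 Vinv w \o Vinv v.
Proof.
move=> vV wV x; have [vwK _] := Vinv_bijective (bij_comp (V_bijective vV) (V_bijective wV)).
by rewrite -{1}(VKV vV x) -(VKV wV (Vinv v x)) vwK.
Qed.

Lemma isQ2_wcat m z : isQ2 (wcat m z) <-> isQ2 z.
Proof.
split=> [[N zN] | [N zN]].
  by exists N => n nN; rewrite -(wcat_addn m z n) zN // (leq_trans nN (leq_addr _ _)).
exists (N + size m) => n nN; rewrite /wcat ltnNge (leq_trans (leq_addl _ _) nN) /=.
by apply: zN; rewrite leq_subRL ?(leq_trans (leq_addl _ _) nN) // addnC.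
Qed.

Lemma V_isQ2 v x : isV v -> isQ2 (v x) <-> isQ2 x.
Proof.
move=> [ms [ms' vms]]; have [k [z [_ -> ->]]] := V_data_dom vms x.
by rewrite !isQ2_wcat.
Qed.

Lemma Vinv_isQ2 v x : isV v -> isQ2 (Vinv v x) <-> isQ2 x.
Proof. by move=> vV; rewrite -(V_isQ2 _ vV) VKV. Qed.

Definition has_log2_slope (v : cantor -> cantor) (y : cantor) (d : int) : Prop :=
  exists a b, [/\ in_cyl a y, replaces v a b & d = ((size a)%:Z - (size b)%:Z)%R].

Lemma replaces_extend_size v a b u b' : replaces v a b -> replaces v (a ++ u) b' ->
  ((size (a ++ u))%:Z - (size b')%:Z = (size a)%:Z - (size b)%:Z)%R.
Proof.
move=> vab vab'; have -> : size b' = size (b ++ u).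
  by apply: wcat_size_eq => z; rewrite -vab' !wcat_cat (vab (wcat u z)).
rewrite !size_cat; lia.
Qed.

Lemma has_log2_slope_unique v y d1 d2 :
  has_log2_slope v y d1 -> has_log2_slope v y d2 -> d1 = d2.
Proof.
move=> [a1 [b1 [[z1 ->] v1 ->]]] [a2 [b2 [[z2 yE] v2 ->]]].
case: (wcat_eq_prefix yE) => -[u aE].
  by subst a2; rewrite (replaces_extend_size v1 v2).
by subst a1; rewrite (replaces_extend_size v2 v1).
Qed.

Lemma has_log2_slope_V_data v ms ms' k z : V_data v ms ms' -> k < size ms ->
  has_log2_slope v (wcat (nth [::] ms k) z)
    ((size (nth [::] ms k))%:Z - (size (nth [::] ms' k))%:Z)%R.
Proof.
case=> _ _ _ vE klt; exists (nth [::] ms k), (nth [::] ms' k).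
by split=> [|z'|//]; [exists z | exact: vE].
Qed.

Lemma log2_slopeP v y : isV v -> has_log2_slope v y (log2_slope v y).
Proof.
move=> [ms [ms' vms]]; rewrite /log2_slope; set P := (X in epsilon _ X).
have [k [[klt ymk] _]] := (let: And4 part _ _ _ := vms in part) y.
have [|ns [ns' [j [vns jlt [t ->] ->]]]] := epsilon_spec (inhabits 0%R) P.
  by eexists; exists ms, ms', k.
exact: has_log2_slope_V_data.
Qed.

Lemma log2_slope_eq v y d : isV v -> has_log2_slope v y d -> log2_slope v y = d.
Proof. by move=> vV; apply: has_log2_slope_unique (log2_slopeP y vV). Qed.

Lemma has_log2_slope_comp v w y d1 d2 :
  has_log2_slope w y d1 -> has_log2_slope v (w y) d2 ->
  has_log2_slope (v \o w) y (d1 + d2)%R.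
Proof.
move=> [a [b [[z yE] wab ->]]] [c [e [[t wyE] vce ->]]].
rewrite yE wab in wyE; case: (wcat_eq_prefix wyE) => -[u uE].
- subst c; rewrite wcat_cat in wyE; have zE := wcat_inj wyE.
  exists (a ++ u), e; split.
  + by exists t; rewrite yE zE wcat_cat.
  + by move=> z' /=; rewrite wcat_cat wab -wcat_cat vce.
  + rewrite !size_cat; lia.
- subst b; exists a, (e ++ u); split.
  + by exists z.
  + by move=> z' /=; rewrite wab wcat_cat vce wcat_cat.
  + rewrite !size_cat; lia.
Qed.

(** * The dyadic valuation *)

Definition czero : cantor := fun _ => false.

Definition last_one (x : cantor) (L : nat) : Prop :=
  x L /\ forall n, L < n -> x n = false.

Lemma last_one_wcat m z L : last_one z L -> last_one (wcat m z) (L + size m).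
Proof.
move=> [zL zgt]; split=> [|n ltn]; first by rewrite wcat_addn.
rewrite /wcat ltnNge (leq_trans (leq_addl L _) (ltnW ltn)) /=.
by apply: zgt; rewrite ltn_subRL addnC.
Qed.

Lemma isQ2_last_one x : isQ2 x -> x = czero \/ exists L, last_one x L.
Proof.
move=> [N xN]; case: (classic (exists n, x n)) => [[n xn] | no1].
  have ub i : x i -> i <= N by case: (leqP i N) => // /ltnW Ni; rewrite xN.
  case: (ex_maxnP (ex_intro (fun i => x i) n xn) ub) => L xL maxL.
  right; exists L; split=> // i ltLi; apply/negbTE/negP => /maxL; lia.
left; apply: functional_extensionality => i; apply/negbTE/negP => xi.
by apply: no1; exists i.
Qed.

Section DyadicValuation.
Local Open Scope ring_scope.

Lemma q2rat_eq x N : (forall n, (N <= n)%N -> x n = false) ->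
  q2rat x = \sum_(i < N) (x i)%:R / 2%:R ^+ i.+1.
Proof.
have trunc M K : (K <= M)%N -> (forall n, (K <= n)%N -> x n = false) ->
    \sum_(i < M) (x i)%:R / 2%:R ^+ i.+1 = \sum_(i < K) (x i)%:R / 2%:R ^+ i.+1 :> rat.
  move=> KM xK; rewrite -!(big_mkord xpredT (fun i => (x i)%:R / 2%:R ^+ i.+1)).
  rewrite (@big_cat_nat _ _ _ K 0 M) //= [X in _ + X](eq_big_nat _ _ (F2 := fun=> 0)).
    by rewrite big1_eq addr0.
  by move=> i /andP [Ki _]; rewrite xK ?mul0r.
move=> xN; have xB : forall n, (q2bound x <= n)%N -> x n = false.
  apply: (epsilon_spec (inhabits 0%N) (fun N => forall n, (N <= n)%N -> x n = false)).
  by exists N.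
by rewrite /q2rat -(trunc _ _ (leq_maxl _ N) xB) (trunc _ _ (leq_maxr _ _) xN).
Qed.

Lemma q2rat0 : q2rat czero = 0.
Proof. by rewrite (@q2rat_eq _ 0) ?big_ord0. Qed.

Lemma q2rat_last_one x L : last_one x L ->
  exists2 K, odd K & q2rat x = K%:R / (2 ^ L.+1)%N%:R.
Proof.
move=> [xL xgt]; exists (\sum_(i < L.+1) x i * 2 ^ (L - i))%N.
  rewrite big_ord_recr /= subnn expn0 xL muln1 oddD addbT -dvdn2.
  apply: dvdn_sum => i _; apply/dvdn_mull/dvdn_exp => //.
  by rewrite subn_gt0 ltn_ord.
rewrite (@q2rat_eq _ L.+1) // natr_sum mulr_suml; apply: eq_bigr => i _.
have -> : (2 ^ L.+1)%N = (2 ^ (L - i) * 2 ^ i.+1)%N.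
  by rewrite -expnD; congr expn; have := ltn_ord i; lia.
by rewrite !natrM !natrX invfM mulrA mulfK // expf_neq0 // pnatr_eq0.
Qed.

Lemma nu_odd_div_pow2 K n : odd K -> nu (K%:R / (2 ^ n)%N%:R) = - n%:Z.
Proof.
move=> oddK; have K_gt0 : (0 < K)%N by case: K oddK.
have cop : coprime `|Posz K| `|Posz (2 ^ n)%N| by rewrite !absz_nat coprimeXr // coprimen2.
have nz : K%:R / (2 ^ n)%N%:R != 0 :> rat.
  by rewrite mulf_neq0 ?invr_eq0 ?pnatr_eq0 -?lt0n ?expn_gt0.
rewrite /nu (negbTE nz); move: (coprimeq_num cop) (coprimeq_den cop).
rewrite /intmul /= => -> ->; rewrite gtr0_sg ?mul1r ?ltz_nat ?expn_gt0 //.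
rewrite ifF; last by apply/eqP => /eqP; rewrite eqz_nat expn_eq0.
have -> : logn 2 `|Posz K| = 0 by rewrite logn_coprime // coprime2n.
by rewrite /absz pfactorK // sub0r.
Qed.

Lemma nu_q2rat_last_one x L : last_one x L -> nu (q2rat x) = - (L.+1)%:Z.
Proof. by move/q2rat_last_one => [K oddK ->]; apply: nu_odd_div_pow2. Qed.

End DyadicValuation.

Section Powers.
Variable Gam : groupType.
Implicit Types g zeta xi : Gam.

Lemma zpow_subn g m n : zpow g (m%:Z - n%:Z)%R = (g ^+ m / g ^+ n)%g.
Proof.
case: (leqP n m) => [nm | mn].
  have -> : (m%:Z - n%:Z)%R = Posz (m - n) by lia.
  exact: expgnFr.
have -> : (m%:Z - n%:Z = Negz (n - m).-1)%R by rewrite NegzE prednK ?subn_gt0 //; lia.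
rewrite /= prednK ?subn_gt0 // -{2}(subnK (ltnW mn)) expgnDr invgM.
by rewrite mulgA mulgV mul1g.
Qed.

Lemma zpowD g a b : zpow g (a + b)%R = (zpow g a * zpow g b)%g.
Proof.
have as_diff (z : int) : exists m n, z = (m%:Z - n%:Z)%R.
  by case: z => n; [exists n, 0%N; rewrite subr0 | exists 0%N, n.+1; rewrite NegzE sub0r].
have [m1 [n1 ->]] := as_diff a; have [m2 [n2 ->]] := as_diff b.
have -> : (m1%:Z - n1%:Z + (m2%:Z - n2%:Z) = (m1 + m2)%:Z - (n1 + n2)%:Z)%R by lia.
have gC k l : commute (g ^+ k) (g ^+ l) by apply/commuteX2/commute_refl.
rewrite !zpow_subn [(n1 + n2)%N]addnC !expgnDr invgM !mulgA; congr (_ * _)%g.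
by rewrite -!mulgA; congr (_ * _)%g; apply/commuteV/gC.
Qed.

Lemma central1 : central (1%g : Gam).
Proof. by move=> g; rewrite mulg1 mul1g. Qed.

Lemma central_zpow zeta z : central zeta -> central (zpow zeta z).
Proof.
move=> zetaC g; apply: commute_sym; case: z => n /=; first exact/commuteX/commute_sym.
exact/commuteV/commuteX/commute_sym.
Qed.

Lemma zpowMn zeta xi z : commute zeta xi ->
  zpow (zeta * xi)%g z = (zpow zeta z * zpow xi z)%g.
Proof.
move=> zx; case: z => n /=; first exact: expgMn.
rewrite expgMn // invgM; apply/commuteV/commute_sym/commuteV.
exact/commuteX2.
Qed.

End Powers.

Section FiniteSupport.
Variable Gam : groupType.

Lemma fsupp_mul (a b : cantor -> Gam) : fsupp a -> fsupp b -> fsupp (fun x => a x * b x)%g.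
Proof.
move=> [a1 [s1 aS]] [b1 [s2 bS]]; split=> [x xQ | ]; first by rewrite a1 // b1 // mulg1.
exists (s1 ++ s2)%list => x abx; apply: List.in_or_app.
case: (classic (a x = 1%g)) => [ax | /aS]; last by left.
by right; apply: bS => bx; apply: abx; rewrite ax bx mulg1.
Qed.

Lemma fsupp_inv (a : cantor -> Gam) : fsupp a -> fsupp (fun x => (a x)^-1)%g.
Proof.
move=> [a1 [s aS]]; split=> [x xQ | ]; first by rewrite a1 // invg1.
by exists s => x ax; apply: aS => a1x; apply: ax; rewrite a1x invg1.
Qed.

End FiniteSupport.

(** * The cocycle and the automorphisms [E_zeta] *)

Lemma p_v_comp v w x : isV v -> isV w -> p_v (v \o w) x = (p_v v x + p_v w (Vinv v x))%R.
Proof.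
move=> vV wV; rewrite /p_v Vinv_comp //=; set y := Vinv w (Vinv v x).
have wy : w y = Vinv v x by rewrite VKV.
have := has_log2_slope_comp (log2_slopeP y wV) (log2_slopeP (w y) vV).
by move/(log2_slope_eq (V_comp vV wV)) => ->; rewrite wy; lia.
Qed.

Lemma p_v_wcat_last_one v ms ms' k z L : V_data v ms ms' -> k < size ms ->
  last_one z L -> p_v v (wcat (nth [::] ms' k) z) = 0%R.
Proof.
move=> vms klt zL; have vV : isV v by exists ms, ms'.
have vinvE : Vinv v (wcat (nth [::] ms' k) z) = wcat (nth [::] ms k) z.
  by case: vms => _ _ _ vE; rewrite -vE // VK.
rewrite /p_v vinvE (log2_slope_eq vV (has_log2_slope_V_data z vms klt)).
by rewrite !(nu_q2rat_last_one (last_one_wcat _ zL)); lia.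
Qed.

Lemma In_map_nth (T U : Type) (f : T -> U) (x0 : T) (s : seq T) k :
  k < size s -> List.In (f (nth x0 s k)) (map f s).
Proof. by elim: s k => [|x s IH] [|k] //= klt; [left | right; apply: IH]. Qed.

Section Cocycle.
Variables (Gam : groupType) (zeta : Gam).

Lemma c_coc_notQ2 v x : ~ isQ2 x -> c_coc zeta v x = 1%g.
Proof. by rewrite /c_coc; case: excluded_middle_informative. Qed.

Lemma c_coc_Q2 v x : isQ2 x -> c_coc zeta v x = zpow zeta (p_v v x).
Proof. by rewrite /c_coc; case: excluded_middle_informative. Qed.

Lemma c_coc_fsupp v : isV v -> fsupp (c_coc zeta v).
Proof.
move=> vV; split=> [x|]; first exact: c_coc_notQ2.
have [ms [ms' vms]] := vV; exists (map (wcat^~ czero) ms') => y cy.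
case: (classic (isQ2 y)) => [yQ | /c_coc_notQ2 //].
have [k [z [klt yE _]]] := V_data_cod vms y.
have zQ : isQ2 z by rewrite yE isQ2_wcat in yQ.
case: (isQ2_last_one zQ) => [z0 | [L zL]].
  by rewrite yE z0; apply: In_map_nth; case: vms => _ _ <-.
by case: cy; rewrite c_coc_Q2 // yE (p_v_wcat_last_one vms klt zL).
Qed.

Lemma c_coc_central v x : central zeta -> central (c_coc zeta v x).
Proof.
case: (classic (isQ2 x)) => [xQ | /c_coc_notQ2 ->]; last by move=> _; apply: central1.
by rewrite c_coc_Q2 //; apply: central_zpow.
Qed.

Lemma c_coc_cocycle v w : isV v -> isV w ->
  c_coc zeta (v \o w) = (fun x => c_coc zeta v x * actV v (c_coc zeta w) x)%g.
Proof.
move=> vV wV; apply: functional_extensionality => x; rewrite /actV.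
case: (classic (isQ2 x)) => [xQ | xnQ].
  have xQ' : isQ2 (Vinv v x) by apply/(Vinv_isQ2 x vV).
  by rewrite !c_coc_Q2 // p_v_comp // zpowD.
have xnQ' : ~ isQ2 (Vinv v x) by move/(Vinv_isQ2 x vV).
by rewrite !c_coc_notQ2 // mulg1.
Qed.

End Cocycle.

Lemma c_cocM (Gam : groupType) (zeta xi : Gam) v x : commute zeta xi ->
  c_coc (zeta * xi)%g v x = (c_coc zeta v x * c_coc xi v x)%g.
Proof.
move=> zx; case: (classic (isQ2 x)) => [xQ | xnQ].
  by rewrite !c_coc_Q2 // zpowMn.
by rewrite !c_coc_notQ2 // mulg1.
Qed.

Section Automorphism.
Variables (Gam : groupType) (zeta : Gam).
Hypothesis zetaC : central zeta.

Lemma E_aut_inG g : inG g -> inG (E_aut zeta g).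
Proof. by case: g => a v [aS vV]; split=> //=; apply: fsupp_mul (c_coc_fsupp _ vV). Qed.

Lemma E_aut_Gmul g h : inG g -> inG h ->
  E_aut zeta (Gmul g h) = Gmul (E_aut zeta g) (E_aut zeta h).
Proof.
case: g h => a v [b w] [_ vV] [_ wV]; congr pair; apply: functional_extensionality => x.
rewrite /= c_coc_cocycle // /actV !mulgA; congr (_ * _)%g.
by rewrite -!mulgA (c_coc_central v x zetaC).
Qed.

Lemma E_aut_inj : injective (E_aut zeta).
Proof.
case=> a v [b w] [abE vw]; subst w; congr pair; apply: functional_extensionality => x.
exact: mulIg (congr1 (fun f => f x) abE).
Qed.

Lemma E_aut_surj h : inG h -> exists g, inG g /\ E_aut zeta g = h.
Proof.
case: h => b w [bS wV]; exists ((fun x => b x * (c_coc zeta w x)^-1)%g, w).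
split; first by split=> //=; apply/fsupp_mul/fsupp_inv/c_coc_fsupp.
by congr pair; apply: functional_extensionality => x; rewrite /= mulgVK.
Qed.

Lemma E_aut_isAutG : isAutG (E_aut zeta).
Proof.
split; [exact: E_aut_inG | exact: E_aut_Gmul | | exact: E_aut_surj].
by move=> g h _ _; apply: E_aut_inj.
Qed.

End Automorphism.

Lemma E_autM (Gam : groupType) (zeta xi : Gam) g : central zeta -> central xi ->
  E_aut (zeta * xi)%g g = E_aut zeta (E_aut xi g).
Proof.
move=> zetaC xiC; congr pair; apply: functional_extensionality => x.
by rewrite /= c_cocM // -mulgA (c_coc_central g.2 x zetaC).
Qed.

(* The generator [A] of Thompson's group [F]; it fixes [czero], where [nu]
   vanishes, with slope [1/2]. *)
Definition thompsonA (x : cantor) : cantor :=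
  if x 0 then wcat (if x 1 then [:: true] else [:: false; true]) (cdrop 2 x)
  else wcat [:: false; false] (cdrop 1 x).

Lemma V_data_thompsonA : V_data thompsonA
  [:: [:: false]; [:: true; false]; [:: true; true]]
  [:: [:: false; false]; [:: false; true]; [:: true]].
Proof.
split=> //.
1,2: by apply/cyl_partitionP => x; rewrite /in_cylb /=; case: (x 0); case: (x 1).
move=> [|[|[|k]]] y //= _; rewrite /thompsonA /=.
- by rewrite (cdrop_wcat [:: false]).
- by rewrite (cdrop_wcat [:: true; false]).
- by rewrite (cdrop_wcat [:: true; true]).
Qed.

Lemma p_v_thompsonA : p_v thompsonA czero = (-1)%R.
Proof.
have AV : isV thompsonA by do 2 eexists; apply: V_data_thompsonA.
have A0 : thompsonA czero = czero.
  by apply: functional_extensionality => -[|[|n]].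
have Ainv0 : Vinv thompsonA czero = czero by rewrite -{1}A0 VK.
have czeroE : czero = wcat [:: false] czero by apply: functional_extensionality => -[|n].
have slope0 := has_log2_slope_V_data czero V_data_thompsonA (isT : 0 < 3).
by rewrite /p_v Ainv0 czeroE (log2_slope_eq AV slope0) -czeroE q2rat0 /nu eqxx.
Qed.

Lemma E_aut_faithful (Gam : groupType) (zeta xi : Gam) :
  (forall g, inG g -> E_aut zeta g = E_aut xi g) -> zeta = xi.
Proof.
move=> Eeq; have gV : inG ((fun=> 1%g) : cantor -> Gam, thompsonA).
  by split; [split=> //; exists nil | do 2 eexists; apply: V_data_thompsonA].
have := congr1 (fun g => g.1 czero) (Eeq _ gV).
have czeroQ : isQ2 czero by exists 0.
by rewrite /= !c_coc_Q2 // p_v_thompsonA !mul1g => /invg_inj.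
Qed.

Theorem mainTheorem13 (Gam : groupType) :
  (* c(zeta) takes values in (+)_{Q_2} Z(Gamma) *)
  (forall zeta : Gam, central zeta ->
     forall v, isV v ->
       fsupp (c_coc zeta v) /\ (forall x, central (c_coc zeta v x))) /\
  (* cocycle identity c_{vw} = c_v . c_w^v *)
  (forall zeta : Gam, central zeta ->
     forall v w, isV v -> isV w ->
       c_coc zeta (v \o w) = (fun x => c_coc zeta v x * actV v (c_coc zeta w) x)%g) /\
  (* each E_zeta is an automorphism of G *)
  (forall zeta : Gam, central zeta -> isAutG (E_aut zeta)) /\
  (* zeta |-> E_zeta is a group morphism Z(Gamma) -> Aut(G) *)
  (forall zeta xi : Gam, central zeta -> central xi ->
     forall g, inG g -> E_aut (zeta * xi)%g g = E_aut zeta (E_aut xi g)) /\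
  (* and it is injective *)
  (forall zeta xi : Gam, central zeta -> central xi ->
     (forall g, inG g -> E_aut zeta g = E_aut xi g) -> zeta = xi).
Proof.
split.
  by move=> zeta zetaC v vV; split=> [|x]; [apply: c_coc_fsupp | apply: c_coc_central].
split; first by move=> zeta _ v w; apply: c_coc_cocycle.
split; first by move=> zeta; apply: E_aut_isAutG.
split; first by move=> zeta xi zetaC xiC g _; apply: E_autM.
by move=> zeta xi _ _; apply: E_aut_faithful.
Qed.
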